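(* Let $S$ be a finite set of agents, $p>0$ a price and $k$ a positive integer. Let $(x,\tilde x)$ be the pair returned by $\mathrm{Indiv\_Alloc}(S,p,k)$ and let $x'$ be the allocation returned by $\mathrm{Div\_Alloc}(S,p,k)$. Then $$\mathbb{E}\Big[\sum_{i\in S}\tilde x_i\Big]\ \ge\ \frac12\sum_{i\in S} x'_i,$$ where the expectation is over the internal randomness of $\mathrm{Indiv\_Alloc}$ (and, if relevant, of $\mathrm{Div\_Alloc}$).
   Context: Each agent $i$ has a value $v_i\ge 0$ and a budget $b_i\ge 0$. The procedure $\mathrm{Div\_Alloc}(S,p,k)$: set $k'\gets k$, $x_i\gets 0$ for all $i\in S$; draw a uniformly random permutation $\pi$ of $S$; for $t=1,\dots,|S|$, if $v_{\pi(t)}\ge p$ set $x_{\pi(t)}\gets\min\{b_{\pi(t)}/p,k'\}$ and $k'\gets k'-x_{\pi(t)}$; return $x$. (Note $\sum_i x_i=\min\{\sum_{i\in S: v_i\ge p} b_i/p,\ k\}$.) The procedure $\mathrm{Indiv\_Alloc}(S,p,k)$: draw a uniformly random permutation $\pi$ of $S$; set $k'\gets k$, $x_i\gets 0$, $\tilde x_i\gets 0$ for all $i\in S$; for $t=1,\dots,|S|$, with $i=\pi(t)$: if $v_i\ge p$, then (a) if $k'\le b_i/p$, set $x_i\gets k'$ and $\tilde x_i\gets k'$; (b) otherwise set $\tilde x_i\gets b_i/p$ and set $x_i\gets\lceil b_i/p\rceil$ with probability $b_i/p-\lfloor b_i/p\rfloor$ and $x_i\gets\lfloor b_i/p\rfloor$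 otherwise (independently of everything else); then set $k'\gets k'-x_i$. Return $(x,\tilde x)$. Here $x$ is the (integral) allocation and $\tilde x$ is the quantity the agent is charged for. *)

From HB Require Import structures.
From mathcomp Require Import all_boot all_order all_algebra all_fingroup.
Set Implicit Arguments. Unset Strict Implicit. Unset Printing Implicit Defensive.
Import Order.TTheory GRing.Theory Num.Theory.
Local Open Scope ring_scope.

(* Agents are S = 'I_n, with values v and budgets b.  A random permutation is
   an element of 'S_n (uniform: averaged with weight 1/n!).  The t-th agent
   processed is pi t, t = 0..n-1. *)

Section Alloc.
Variables (R : archiRealFieldType) (n : nat) (v b : 'I_n -> R) (p : R).

Definition div_step (st : R * {ffun 'I_n -> R}) (i : 'I_n) :=
  let: (k', x) := st in
  if p <= v i then
    let xi := Num.min (b i / p) k' in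
    (k' - xi, [ffun j => if j == i then xi else x j])
  else (k', x).

Definition div_alloc (k : nat) (pi : 'S_n) : {ffun 'I_n -> R} :=
  (foldl div_step (k%:R, [ffun => 0]) [seq pi t | t <- enum 'I_n]).2.

(* Indiv_Alloc: the rounding coins are c : {ffun 'I_n -> bool} (one
   independent coin per agent; c i = true means "round up").
   state = (k', x, xt). *)
Definition indiv_step (c : {ffun 'I_n -> bool})
    (st : R * {ffun 'I_n -> R} * {ffun 'I_n -> R}) (i : 'I_n) :=
  let: (k', x, xt) := st in
  if p <= v i then
    if k' <= b i / p then
      (k' - k', [ffun j => if j == i then k' else x j],
                [ffun j => if j == i then k' else xt j])
    else
      let q := b i / p in
      let xi : R := if c i then (Num.ceil q)%:~R else (Num.floor q)%:~R in
      (k' - xi, [ffun j => if j == i then xi else x j],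
                [ffun j => if j == i then q else xt j])
  else (k', x, xt).

Definition indiv_alloc (k : nat) (pi : 'S_n) (c : {ffun 'I_n -> bool}) :=
  let: (_, x, xt) :=
    foldl (indiv_step c) (k%:R, [ffun => 0], [ffun => 0])
          [seq pi t | t <- enum 'I_n] in (x, xt).

Definition coin_prob (c : {ffun 'I_n -> bool}) : R :=
  \prod_(i < n) (let fr := b i / p - (Num.floor (b i / p))%:~R in
                 if c i then fr else 1 - fr).

Definition E_indiv_charged (k : nat) : R :=
  (n`!%:R)^-1 * \sum_(pi : 'S_n) \sum_(c : {ffun 'I_n -> bool})
     coin_prob c * \sum_(i < n) (indiv_alloc k pi c).2 i.

(* E[ sum_i x'_i ] over uniform permutation (deterministic in fact). *)
Definition E_div_total (k : nat) : R :=
  (n`!%:R)^-1 * \sum_(pi : 'S_n) \sum_(i < n) div_alloc k pi i.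

End Alloc.

From HB Require Import structures.
From mathcomp Require Import all_boot all_order all_algebra all_fingroup.
From mathcomp Require Import ring lra.
Set Implicit Arguments. Unset Strict Implicit. Unset Printing Implicit Defensive.
Import Order.TTheory GRing.Theory Num.Theory.
Local Open Scope ring_scope.

(* Fix the processing order and write q_i = b_i / p.  Div_Alloc fills the
   capacity k greedily, so it allocates min(sum of active q_i, k) in total.
   Indiv_Alloc charges q_i to every agent served before the capacity runs out
   and the whole remainder to the one that exhausts it; its only deviation from
   the greedy filling is the rounding error q_i - x_i of the served agents.
   A case analysis on one step shows
     charged >= (min(sum q_i, k) + total rounding error) / 2,
   and the rounding error has mean zero because each coin is independent of
   everything that happened before it is tossed. *)

Lemma minD_greedy (R : realDomainType) (a B K : R) : 0 <= a -> 0 <= B ->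
  Num.min a K + Num.min B (K - Num.min a K) = Num.min (a + B) K.
Proof. by move=> ha hB; rewrite !minEle; do 3 case: ifP; lra. Qed.

Lemma sum_ffun_update (T : finType) (V : zmodType) (f : {ffun T -> V}) i w :
  \sum_j [ffun j => if j == i then w else f j] j = w + \sum_j f j - f i.
Proof.
rewrite (bigD1 i) //= [in RHS](bigD1 i) //= ffunE eqxx.
rewrite (eq_bigr (fun j => f j)); last by move=> j /negbTE ji; rewrite ffunE ji.
by rewrite addrA addrAC addrK.
Qed.

Lemma ffun_update_out (T : finType) (V : nmodType) (f : {ffun T -> V}) i w (s : seq T) :
  i \notin s -> (forall j, j \in i :: s -> f j = 0) ->
  forall j, j \in s -> [ffun j => if j == i then w else f j] j = 0.
Proof.
move=> ni f0 j js; rewrite ffunE; case: eqP => [ji|_].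
  by move: js; rewrite ji (negbTE ni).
by apply: f0; rewrite inE js orbT.
Qed.

Section Allocations.
Variables (R : archiRealFieldType) (n : nat) (v b : 'I_n -> R) (p : R).
Hypotheses (hb : forall i, 0 <= b i) (hp : 0 < p).

Local Notation coins := {ffun 'I_n -> bool}.

Definition demand i := b i / p.

Lemma demand_ge0 i : 0 <= demand i.
Proof. by rewrite divr_ge0 // ltW. Qed.

Definition rounded (c : coins) i : R :=
  if c i then (Num.ceil (demand i))%:~R else (Num.floor (demand i))%:~R.

Definition coin_weight i (up : bool) : R :=
  let fr := demand i - (Num.floor (demand i))%:~R in if up then fr else 1 - fr.

Lemma coin_probE c : coin_prob b p c = \prod_(i < n) coin_weight i (c i).
Proof. by []. Qed.

Definition processing_order (pi : 'S_n) := [seq pi t | t <- enum 'I_n].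

Lemma uniq_processing_order pi : uniq (processing_order pi).
Proof. by rewrite map_inj_uniq ?enum_uniq //; apply: perm_inj. Qed.

Definition active_demand (s : seq 'I_n) := \sum_(i <- s | p <= v i) demand i.

Lemma active_demand_ge0 s : 0 <= active_demand s.
Proof. by apply: sumr_ge0 => i _; apply: demand_ge0. Qed.

Fixpoint charged (s : seq 'I_n) (K : R) (c : coins) : R :=
  match s with
  | [::] => 0
  | i :: s => if p <= v i then
                if K <= demand i then K + charged s 0 c
                else demand i + charged s (K - rounded c i) c
              else charged s K c
  end.

Fixpoint rounding_error (s : seq 'I_n) (K : R) (c : coins) : R :=
  match s with
  | [::] => 0
  | i :: s => if p <= v i then
                if K <= demand i then rounding_error s 0 c
                else (demand i - rounded c i) + rounding_error s (K - rounded c i) c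
              else rounding_error s K c
  end.

Lemma foldl_indiv_step_charged c (s : seq 'I_n) K (x xt : {ffun 'I_n -> R}) :
  uniq s -> (forall j, j \in s -> xt j = 0) ->
  \sum_j (foldl (indiv_step v b p c) (K, x, xt) s).2 j = \sum_j xt j + charged s K c.
Proof.
elim: s K x xt => [|i s IH] K x xt /=; first by rewrite addr0.
move=> /andP[ni us] xt0.
have xti : xt i = 0 by apply: xt0; rewrite inE eqxx.
rewrite /indiv_step -/(demand i); case: ifP => hv; last first.
  by apply: IH => // j js; apply: xt0; rewrite inE js orbT.
case: ifP => hK; rewrite IH ?sum_ffun_update ?xti ?subr0 -?/(rounded c i) ?subrr //;
  first [lra | exact: ffun_update_out ni xt0].
Qed.

Lemma foldl_div_step_total (s : seq 'I_n) K (x : {ffun 'I_n -> R}) :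
  uniq s -> (forall j, j \in s -> x j = 0) -> 0 <= K ->
  \sum_j (foldl (div_step v b p) (K, x) s).2 j =
  \sum_j x j + Num.min (active_demand s) K.
Proof.
elim: s K x => [|i s IH] K x /=.
  by move=> _ _ hK; rewrite /active_demand big_nil minEle; case: ifP; lra.
move=> /andP[ni us] x0 hK.
have xi : x i = 0 by apply: x0; rewrite inE eqxx.
rewrite /div_step -/(demand i) /active_demand big_cons -/(active_demand s).
case: ifP => hv; last by apply: IH => // j js; apply: x0; rewrite inE js orbT.
rewrite IH //.
- rewrite sum_ffun_update xi subr0 -minD_greedy ?demand_ge0 ?active_demand_ge0 //.
  lra.
- exact: ffun_update_out ni x0.
- by rewrite minEle; case: ifP; lra.
Qed.

Lemma div_alloc_total (pi : 'S_n) (k : nat) :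
  \sum_i div_alloc v b p k pi i = Num.min (active_demand (processing_order pi)) k%:R.
Proof.
rewrite /div_alloc foldl_div_step_total ?uniq_processing_order ?ler0n //.
  by rewrite big1 ?add0r // => j _; rewrite ffunE.
by move=> j _; rewrite ffunE.
Qed.

Lemma indiv_alloc_charged (pi : 'S_n) (k : nat) c :
  \sum_i (indiv_alloc v b p k pi c).2 i = charged (processing_order pi) k%:R c.
Proof.
have -> : (indiv_alloc v b p k pi c).2 =
    (foldl (indiv_step v b p c) (k%:R, [ffun => 0], [ffun => 0])
           (processing_order pi)).2.
  by rewrite /indiv_alloc; case: foldl => [[]].
rewrite foldl_indiv_step_charged ?uniq_processing_order //.
  by rewrite big1 ?add0r // => j _; rewrite ffunE.
by move=> j _; rewrite ffunE.
Qed.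

(* Rounding never overshoots an integral capacity; this is why k must be an integer. *)
Lemma rounded_int_le c i (z : int) : demand i < z%:~R ->
  exists r : int, [/\ 0 <= r, r <= z & rounded c i = r%:~R].
Proof.
move=> hz.
have hc : Num.ceil (demand i) <= z by rewrite ceil_le_int ltW.
have hf0 : 0 <= Num.floor (demand i) by rewrite floor_ge0 demand_ge0.
have hfc : Num.floor (demand i) <= Num.ceil (demand i) by rewrite ceil_floor lerDl.
rewrite /rounded; case: (c i).
- by exists (Num.ceil (demand i)); split => //; apply: le_trans hfc.
- by exists (Num.floor (demand i)); split => //; apply: le_trans hc.
Qed.

Lemma half_greedy_le_charged (s : seq 'I_n) c (z : int) : 0 <= z ->
  2^-1 * (Num.min (active_demand s) z%:~R + rounding_error s z%:~R c)
    <= charged s z%:~R c.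
Proof.
elim: s z => [|i s IH] z hz /=.
  by rewrite /active_demand big_nil minEle ler0z hz; lra.
rewrite /active_demand big_cons -/(active_demand s); case: ifP => hv; last exact: IH.
have hq := demand_ge0 i; have hB := active_demand_ge0 s.
have hz' : (0 : R) <= z%:~R by rewrite ler0z.
case: ifP => hK.
  have := IH 0 (lexx _); rewrite mulr0z [Num.min _ 0]minEle.
  by case: ifP; rewrite minEle; case: ifP; lra.
move/negbT: hK; rewrite -ltNge => hK.
have [r [hr0 hrz ->]] := rounded_int_le c hK.
have hr : (0 : R) <= r%:~R by rewrite ler0z.
have := IH (z - r); rewrite subr_ge0 intrB => /(_ hrz).
by rewrite !minEle; do 2 case: ifP; lra.
Qed.

Lemma coin_weight_ge0 i up : 0 <= coin_weight i up.
Proof.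
have /andP[h1 h2] := floor_itv (demand i).
by rewrite /coin_weight; case: up; rewrite intrD in h2; lra.
Qed.

Lemma coin_prob_ge0 c : 0 <= coin_prob b p c.
Proof. by rewrite coin_probE; apply: prodr_ge0 => i _; apply: coin_weight_ge0. Qed.

Definition Ecoin (f : coins -> R) := \sum_(c : coins) coin_prob b p c * f c.

Lemma ler_Ecoin f g : (forall c, f c <= g c) -> Ecoin f <= Ecoin g.
Proof. by move=> fg; apply: ler_sum => c _; rewrite ler_wpM2l ?coin_prob_ge0. Qed.

Lemma EcoinD f g : Ecoin (fun c => f c + g c) = Ecoin f + Ecoin g.
Proof. by rewrite -big_split; apply: eq_bigr => c _; rewrite mulrDr. Qed.

Lemma EcoinZ a f : Ecoin (fun c => a * f c) = a * Ecoin f.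
Proof. by rewrite mulr_sumr; apply: eq_bigr => c _; rewrite mulrCA. Qed.

Lemma Ecoin_cst a : Ecoin (fun=> a) = a.
Proof.
rewrite /Ecoin -mulr_suml (eq_bigr _ (fun c _ => coin_probE c)).
rewrite -(bigA_distr_bigA coin_weight) big1 ?mul1r // => i _.
by rewrite big_bool /coin_weight /=; ring.
Qed.

Definition flip_coin i (c : coins) : coins :=
  [ffun j => if j == i then ~~ c j else c j].

Lemma flip_coinK i : involutive (flip_coin i).
Proof. by move=> c; apply/ffunP => j; rewrite !ffunE; case: (j == i); rewrite ?negbK. Qed.

Lemma flip_coin_id i c : flip_coin i c i = ~~ c i.
Proof. by rewrite ffunE eqxx. Qed.

Lemma flip_coin_neq i j c : j != i -> flip_coin i c j = c j.
Proof. by move=> /negbTE ji; rewrite ffunE ji. Qed.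

(* Pairing c with flip_coin i c factors out the independent coin i. *)
Lemma Ecoin_indep i (h : coins -> R) (phi : bool -> R) :
  (forall c, h (flip_coin i c) = h c) ->
  Ecoin (fun c => h c * phi (c i)) =
  (coin_weight i true * phi true + coin_weight i false * phi false) * Ecoin h.
Proof.
move=> hflip.
pose rest c := \prod_(j < n | j != i) coin_weight j (c j).
have probE c : coin_prob b p c = coin_weight i (c i) * rest c.
  by rewrite coin_probE (bigD1 i).
have rest_flip c : rest (flip_coin i c) = rest c.
  by apply: eq_bigr => j ji; rewrite flip_coin_neq.
have pair_flip (G : coins -> R) :
    \sum_(c : coins) G c = \sum_(c : coins | c i) (G c + G (flip_coin i c)).
  rewrite (bigID (fun c : coins => c i)) /= big_split /=; congr (_ + _).
  rewrite (reindex_inj (inv_inj (flip_coinK i))) /=.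
  by apply: eq_bigl => c; rewrite flip_coin_id negbK.
rewrite /Ecoin pair_flip [X in _ = _ * X]pair_flip mulr_sumr.
apply: eq_bigr => c ci; rewrite !probE rest_flip hflip flip_coin_id ci /=.
by rewrite /coin_weight; ring.
Qed.

Lemma coin_weight_unbiased i :
  coin_weight i true * (demand i - (Num.ceil (demand i))%:~R) +
  coin_weight i false * (demand i - (Num.floor (demand i))%:~R) = 0.
Proof.
rewrite /coin_weight ceil_floor intrD.
case: (boolP (demand i \is a Num.int)) => /= [|_]; last by ring.
by rewrite intrEfloor => /eqP ->; rewrite addr0; ring.
Qed.

Definition flip_invariant (h : coins -> R) (s : seq 'I_n) :=
  forall j, j \in s -> forall c, h (flip_coin j c) = h c.

(* h carries the coins tossed before s, which are independent of those in s. *)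
Lemma Ecoin_rounding_error (s : seq 'I_n) K (h : coins -> R) :
  uniq s -> flip_invariant h s -> Ecoin (fun c => h c * rounding_error s K c) = 0.
Proof.
elim: s K h => [|i s IH] K h; first by move=> _ _; apply: big1 => c _; rewrite !mulr0.
move=> /andP[ni us] hinv.
have hinv' : flip_invariant h s by move=> j js; apply: hinv; rewrite inE js orbT.
case hv: (p <= v i).
  2: by rewrite -(IH K h) //; apply: eq_bigr => c _; rewrite /= hv.
case hK: (K <= demand i).
  by rewrite -(IH 0 h) //; apply: eq_bigr => c _; rewrite /= hv hK.
pose err (up : bool) :=
  demand i - (if up then Num.ceil (demand i) else Num.floor (demand i))%:~R.
have hinv_up (up : bool) :
    flip_invariant (fun c => h c * (if up then c i else ~~ c i)%:R) s.
  move=> j js c; rewrite hinv' // flip_coin_neq //.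
  by apply: contraNneq ni => ->.
transitivity (Ecoin (fun c => h c * err (c i) +
   (h c * (c i)%:R * rounding_error s (K - (Num.ceil (demand i))%:~R) c +
    h c * (~~ c i)%:R * rounding_error s (K - (Num.floor (demand i))%:~R) c))).
  by apply: eq_bigr => c _; rewrite /= hv hK /err /rounded; case: (c i) => /=; ring.
rewrite !EcoinD (IH _ _ us (hinv_up true)) (IH _ _ us (hinv_up false)).
rewrite Ecoin_indep; last by move=> c; apply: hinv; rewrite inE eqxx.
by rewrite /err coin_weight_unbiased mul0r !addr0.
Qed.

Lemma half_min_le_Ecoin_charged (s : seq 'I_n) (k : nat) : uniq s ->
  2^-1 * Num.min (active_demand s) k%:R <= Ecoin (charged s k%:R).
Proof.
move=> us.
have err0 : Ecoin (rounding_error s k%:R) = 0.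
  rewrite -(Ecoin_rounding_error k%:R us (h := fun=> 1)) //.
  by apply: eq_bigr => c _; rewrite mul1r.
apply: le_trans (ler_Ecoin (fun c => half_greedy_le_charged s c (le0z_nat k))).
by rewrite EcoinZ EcoinD Ecoin_cst err0 addr0.
Qed.

End Allocations.

Theorem lemma1 (R : archiRealFieldType) (n : nat) (v b : 'I_n -> R) (p : R)
  (k : nat) (hv : forall i, 0 <= v i) (hb : forall i, 0 <= b i)
  (hp : 0 < p) (hk : (0 < k)%N) :
  E_indiv_charged v b p k >= 2^-1 * E_div_total v b p k.
Proof.
rewrite /E_indiv_charged /E_div_total [leLHS]mulrCA ler_wpM2l ?invr_ge0 ?ler0n //.
rewrite mulr_sumr; apply: ler_sum => pi _.
rewrite div_alloc_total //.
under eq_bigr do rewrite indiv_alloc_charged.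
have bound := half_min_le_Ecoin_charged v hb hp k (uniq_processing_order pi).
by apply: le_trans bound _; rewrite /Ecoin.
Qed.
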